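(* Fix $n\ge1$. A point $H\in\mathcal H$ belongs to $\mathcal S_n=\{H\in\mathcal H: X_n(H)=0,\ H^{(n)}=z^n\}$ if and only if $z^n\cdot\mathcal H_+\subset\mathcal H_+$, i.e. multiplication by $z^n$ maps the span $\mathcal H_+$ of the series $H^{(0)},H^{(1)},\dots$ of that point into itself.
   Context: Let $z$ be a formal variable and $\mathcal L$ the space of formal Laurent series $\sum_{j\le N} l_j z^j$ (finitely many positive powers of $z$). Let $\mathcal H$ be the set of sequences $H=(H^{(k)})_{k\ge0}$ of elements of $\mathcal L$ with $H^{(0)}=1$ and, for $k\ge1$, $H^{(k)}=z^k+\sum_{l\ge1}H^k_l z^{-l}$; the coefficients $H^k_l$ are coordinates on $\mathcal H$, and we set $H^0_l=0$. The central system (CS) is the family of vector fields $X_j$, $j\ge1$, on $\mathcal H$, with associated times $t_j$, defined by $$\frac{\partial H^{(k)}}{\partial t_j}=H^{(j+k)}-H^{(j)}H^{(k)}+\sum_{l=1}^{k}H^j_lH^{(k-l)}+\sum_{l=1}^{j}H^k_lH^{(j-l)},\qquad k\ge0;$$ the right-hand side contains only negative powers of $z$, so this determines the components $X_j(H^k_l)$. For $H\in\mathcal H$ let $\mathcal H_+=\mathrm{span}\{H^{(k)}:k\ge0\}$ (finite linear combinations). *)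

From mathcomp Require Import all_boot all_order all_algebra.
Set Implicit Arguments. Unset Strict Implicit. Unset Printing Implicit Defensive.
Import Order.TTheory GRing.Theory Num.Theory.
Local Open Scope ring_scope.

(* A formal Laurent series  sum_{d <= N} l_d z^d  is represented by its
   coefficient function  d : int |-> l_d. *)
Definition laurent (R : fieldType) := int -> R.

(* A point H of the space \mathcal H is given by its coordinates
   c k l = H^k_l  (only the values with k >= 1, l >= 1 are used). *)
Definition coords (R : fieldType) := nat -> nat -> R.

(* The series H^(k):  H^(0) = 1,  H^(k) = z^k + sum_{l>=1} H^k_l z^{-l}. *)
Definition Hser (R : fieldType) (c : coords R) (k : nat) : laurent R :=
  fun d => if k == 0%N then (d == 0)%:R
           else (d == k%:Z)%:R + (if d < 0 then c k (absz d) else 0).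

(* The coordinate H^k_l, i.e. the coefficient of z^{-l} in H^(k)
   (so that H^0_l = 0 for l >= 1, as in the paper). *)
Definition Hc (R : fieldType) (c : coords R) (k l : nat) : R :=
  Hser c k (- (l%:Z)).

(* Product of two Laurent series a, b with a_i = 0 for i > N1 and
   b_i = 0 for i > N2:  (ab)_d = sum_{i = d - N2}^{N1} a_i b_{d-i}
   (a finite sum; it is empty / zero when d > N1 + N2). *)
Definition lmul (R : fieldType) (N1 N2 : nat) (a b : laurent R) : laurent R :=
  fun d => \sum_(t < (absz (N1%:Z + N2%:Z - d)%R).+1)
             a (N1%:Z - t%:Z) * b (d - N1%:Z + t%:Z).

(* Right-hand side of the central system:
   dH^(k)/dt_j = H^(j+k) - H^(j)H^(k) + sum_{l=1}^k H^j_l H^(k-l)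
                 + sum_{l=1}^j H^k_l H^(j-l).
   (H^(j) has no coefficient above degree j.) *)
Definition CSrhs (R : fieldType) (c : coords R) (j k : nat) : laurent R :=
  fun d => Hser c (j + k) d - lmul j k (Hser c j) (Hser c k) d
           + \sum_(1 <= l < k.+1) Hc c j l * Hser c (k - l) d
           + \sum_(1 <= l < j.+1) Hc c k l * Hser c (j - l) d.

Definition Xcomp (R : fieldType) (c : coords R) (j k l : nat) : R :=
  CSrhs c j k (- (l%:Z)).

Definition X_vanishes (R : fieldType) (c : coords R) (j : nat) : Prop :=
  forall k l : nat, (1 <= k)%N -> (1 <= l)%N -> Xcomp c j k l = 0.

Definition in_Sn (R : fieldType) (n : nat) (c : coords R) : Prop :=
  X_vanishes c n /\ Hser c n = (fun d : int => (d == n%:Z)%:R).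

Definition in_Hplus (R : fieldType) (c : coords R) (f : laurent R) : Prop :=
  exists (m : nat) (a : nat -> R),
    f = (fun d => \sum_(k < m) a k * Hser c k d).

Definition zpow_mul (R : fieldType) (n : nat) (f : laurent R) : laurent R :=
  fun d => f (d - n%:Z).

From mathcomp Require Import all_boot all_order all_algebra.
From mathcomp Require Import zify.
From Stdlib Require Import FunctionalExtensionality.
Set Implicit Arguments. Unset Strict Implicit.
Import GRing.Theory.
Local Open Scope ring_scope.

(* The nonnegative part of H^(k) is z^k, so an element f of H_+ is determined
   by its nonnegative coefficients: f = sum_k f_k H^(k).  When H^(n) = z^n,
   the right-hand side of the central system is X_n(H^(k)) = G_k - z^n H^(k)
   with G_k = H^(n+k) + sum_{l=1}^n H^k_l H^(n-l), an element of H_+ with the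
   same nonnegative part as z^n H^(k).  Hence z^n H^(k) lies in H_+ exactly
   when it equals G_k, i.e. exactly when X_n vanishes on H^(k); for k = 0,
   G_0 = H^(n) and z^n H^(0) = z^n, which gives the condition H^(n) = z^n. *)

Section Span.

Variables (R : fieldType) (c : coords R).

Lemma Hser_nat (k e : nat) : Hser c k (Posz e) = (e == k)%:R.
Proof. by rewrite /Hser; case: k => [|k] //=; rewrite addr0. Qed.

Lemma sum_Hser_nat (m : nat) (a : nat -> R) (e : nat) :
  \sum_(k < m) a k * Hser c k (Posz e) = if (e < m)%N then a e else 0.
Proof.
elim: m => [|m IHm]; first by rewrite big_ord0.
rewrite big_ord_recr /= IHm Hser_nat ltnS.
by case: (ltngtP e m) => [_|_|->]; rewrite ?mulr0 ?addr0 ?mulr1 ?add0r.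
Qed.

Lemma Hplus_coefE (f : laurent R) (m M : nat) (a : nat -> R) :
  f = (fun d => \sum_(k < m) a k * Hser c k d) -> (m <= M)%N ->
  f = (fun d => \sum_(k < M) f (Posz k) * Hser c k d).
Proof.
move=> f_def le_mM; apply: functional_extensionality => d.
rewrite {1}f_def (big_ord_widen M (fun k => a k * Hser c k d)) // big_mkcond /=.
apply: eq_bigr => k _; rewrite f_def sum_Hser_nat.
by case: ifP; rewrite ?mul0r.
Qed.

Lemma Hplus_eq (f g : laurent R) :
  in_Hplus c f -> in_Hplus c g ->
  (forall e : nat, f (Posz e) = g (Posz e)) -> f = g.
Proof.
move=> [m1 [a1 f_def]] [m2 [a2 g_def]] fg_nat.
rewrite (Hplus_coefE (M := m1 + m2) f_def) ?leq_addr //.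
rewrite (Hplus_coefE (M := m1 + m2) g_def) ?leq_addl //.
by apply: functional_extensionality => d; apply: eq_bigr => k _; rewrite fg_nat.
Qed.

Lemma Hplus0 : in_Hplus c (fun _ => 0).
Proof.
exists 0%N, (fun _ => 0).
by apply: functional_extensionality => d; rewrite big_ord0.
Qed.

Lemma HplusD (f g : laurent R) :
  in_Hplus c f -> in_Hplus c g -> in_Hplus c (fun d => f d + g d).
Proof.
move=> [m1 [a1 f_def]] [m2 [a2 g_def]].
exists (m1 + m2)%N, (fun k => f (Posz k) + g (Posz k)).
apply: functional_extensionality => d.
rewrite {1}(Hplus_coefE (M := m1 + m2) f_def) ?leq_addr //.
rewrite {1}(Hplus_coefE (M := m1 + m2) g_def) ?leq_addl //.
by rewrite -big_split /=; apply: eq_bigr => k _; rewrite mulrDl.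
Qed.

Lemma HplusZ (s : R) (f : laurent R) :
  in_Hplus c f -> in_Hplus c (fun d => s * f d).
Proof.
move=> [m [a f_def]]; exists m, (fun k => s * a k).
apply: functional_extensionality => d; rewrite f_def mulr_sumr.
by apply: eq_bigr => k _; rewrite mulrA.
Qed.

Lemma Hplus_sum (I : Type) (r : seq I) (F : I -> laurent R) :
  (forall i, in_Hplus c (F i)) -> in_Hplus c (fun d => \sum_(i <- r) F i d).
Proof.
move=> HplusF; elim: r => [|i r IHr].
  have -> : (fun d => \sum_(i <- [::]) F i d) = (fun _ => 0).
    by apply: functional_extensionality => d; rewrite big_nil.
  exact: Hplus0.
have -> : (fun d => \sum_(j <- i :: r) F j d) = (fun d => F i d + \sum_(j <- r) F j d).
  by apply: functional_extensionality => d; rewrite big_cons.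
exact: HplusD.
Qed.

Lemma Hplus_Hser (k : nat) : in_Hplus c (Hser c k).
Proof.
exists k.+1, (fun i => (i == k)%:R); apply: functional_extensionality => d.
rewrite big_ord_recr /= eqxx mul1r big1 ?add0r // => i _.
by rewrite (ltn_eqF (ltn_ord i)) mul0r.
Qed.

Lemma zpow_mul_Hser0 (n : nat) :
  zpow_mul n (Hser c 0) = (fun d => (d == n%:Z)%:R).
Proof.
by apply: functional_extensionality => d; rewrite /zpow_mul /Hser /= subr_eq0.
Qed.

Lemma Hplus_zpow_mul (n : nat) :
  (forall k, in_Hplus c (zpow_mul n (Hser c k))) ->
  forall f, in_Hplus c f -> in_Hplus c (zpow_mul n f).
Proof.
move=> Hplus_zpow_Hser f [m [a ->]]; rewrite /zpow_mul.
apply: (@Hplus_sum _ _ (fun k : 'I_m => fun d => a k * zpow_mul n (Hser c k) d)) => k.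
exact: HplusZ.
Qed.

End Span.

Lemma sum_nat_delta (R : pzRingType) (lo hi x : nat) (F : nat -> R) :
  \sum_(lo <= l < hi) F l * (x == l)%:R = if (lo <= x < hi)%N then F x else 0.
Proof.
case: ifP => x_in.
  rewrite (bigD1_seq x) ?mem_index_iota ?iota_uniq //= eqxx mulr1 big1 ?addr0 //.
  by move=> l /negbTE; rewrite eq_sym => ->; rewrite mulr0.
rewrite big1_seq // => l /andP[_]; rewrite mem_index_iota => l_in.
have /negbTE -> : x != l by apply/eqP => x_l; move: x_in; rewrite x_l l_in.
by rewrite mulr0.
Qed.

Section Shift.

Variables (R : fieldType) (c : coords R) (n : nat).

Definition Hshift (k : nat) : laurent R :=
  fun d => Hser c (n + k) d + \sum_(1 <= l < n.+1) Hc c k l * Hser c (n - l) d.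

Lemma Hplus_Hshift (k : nat) : in_Hplus c (Hshift k).
Proof.
apply: HplusD; first exact: Hplus_Hser.
apply: (@Hplus_sum _ _ _ _ (fun l d => Hc c k l * Hser c (n - l) d)) => l.
exact/HplusZ/Hplus_Hser.
Qed.

Lemma Hshift0 : Hshift 0 = Hser c n.
Proof.
apply: functional_extensionality => d; rewrite /Hshift addn0 big_nat_cond big1 ?addr0 //.
move=> l /andP[/andP[l_gt0 _] _]; rewrite /Hc {1}/Hser /=.
have /negbTE -> : - l%:Z != 0 by apply/eqP; lia.
by rewrite mul0r.
Qed.

Lemma zpow_mul_Hser_nat (k e : nat) :
  zpow_mul n (Hser c k) (Posz e) = Hshift k (Posz e).
Proof.
rewrite /zpow_mul /Hshift Hser_nat.
have [le_ne|lt_en] := leqP n e.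
  have -> : Posz e - Posz n = Posz (e - n) by lia.
  rewrite Hser_nat big_nat_cond big1 ?addr0.
    by congr (_%:R); rewrite -(eqn_add2l n) subnKC.
  move=> l /andP[/andP[l_gt0 l_le_n] _]; rewrite Hser_nat.
  have /negbTE -> : e != (n - l)%N by lia.
  by rewrite mulr0.
have -> : Posz e - Posz n = - Posz (n - e) by lia.
have /negbTE -> : e != (n + k)%N by lia.
rewrite add0r (eq_big_nat _ _ (F2 := fun l => Hc c k l * ((n - e)%N == l)%:R)).
  by rewrite sum_nat_delta ifT //; lia.
move=> l l_in; rewrite Hser_nat; congr (_ * _%:R).
by apply/eqP/eqP; lia.
Qed.

Hypothesis Hser_n : Hser c n = (fun d => (d == n%:Z)%:R).

(* With H^(n) = z^n the product H^(n)H^(k) is z^n H^(k), and H^n_l = 0. *)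
Lemma Xcomp_Hshift (k l : nat) :
  Xcomp c n k l = Hshift k (- l%:Z) - zpow_mul n (Hser c k) (- l%:Z).
Proof.
have lmul_n : lmul n k (Hser c n) (Hser c k) (- l%:Z) = Hser c k (- l%:Z - n%:Z).
  rewrite /lmul Hser_n big_ord_recl /= subr0 eqxx mul1r addr0 big1 ?addr0 // => t _.
  have /negbTE -> : n%:Z - (bump 0 t)%:Z != n%:Z by apply/eqP; rewrite /bump; lia.
  by rewrite mul0r.
have Hc_n : \sum_(1 <= l' < k.+1) Hc c n l' * Hser c (k - l') (- l%:Z) = 0.
  rewrite big_nat_cond big1 // => l' /andP[/andP[l'_gt0 _] _].
  rewrite /Hc Hser_n; have /negbTE -> : - l'%:Z != n%:Z by apply/eqP; lia.
  by rewrite mul0r.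
by rewrite /Xcomp /CSrhs lmul_n Hc_n addr0 /Hshift /zpow_mul addrAC.
Qed.

Lemma X_vanishes_zpow_mul_Hser (k : nat) :
  X_vanishes c n -> zpow_mul n (Hser c k) = Hshift k.
Proof.
move=> Xn0; case: k => [|k]; first by rewrite zpow_mul_Hser0 -Hser_n Hshift0.
apply: functional_extensionality => -[e|e]; first exact: zpow_mul_Hser_nat.
rewrite NegzE; apply/eqP; rewrite eq_sym -subr_eq0; apply/eqP.
by rewrite -Xcomp_Hshift Xn0.
Qed.

End Shift.

Theorem mainTheorem7 (R : fieldType) (n : nat) (c : coords R) :
  (1 <= n)%N ->
  (in_Sn n c <->
   (forall f : laurent R, in_Hplus c f -> in_Hplus c (zpow_mul n f))).
Proof.
move=> _; split.
  move=> [Xn0 Hser_n]; apply: Hplus_zpow_mul => k.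
  rewrite (X_vanishes_zpow_mul_Hser Hser_n k Xn0); exact: Hplus_Hshift.
move=> zpow_closed.
have zpow_Hser k : zpow_mul n (Hser c k) = Hshift c n k.
  apply: Hplus_eq; [exact/zpow_closed/Hplus_Hser | exact: Hplus_Hshift |].
  by move=> e; rewrite zpow_mul_Hser_nat.
have Hser_n : Hser c n = (fun d => (d == n%:Z)%:R).
  by rewrite -Hshift0 -zpow_Hser zpow_mul_Hser0.
split=> // k l _ _.
by rewrite Xcomp_Hshift // zpow_Hser subrr.
Qed.
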